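(* Let $(a_i)_{i\in\mathbb{Z}}$ and $(b_i)_{i\in\mathbb{Z}}$ be jointly stationary processes, with $a_i$ taking values in the positive integers and $b_i$ in a finite or countable alphabet, such that: (i) $(a_i)$ is i.i.d.; (ii) each $a_i$ is independent of the joint collection $\{a_j: j<i\}\cup\{b_j:j<i\}$; (iii) each $b_i$ is almost surely determined by $a_i,b_{i-1},b_{i-2},\dots,b_{i-a_i}$. Then the pair process $((a_i,b_i))_{i\in\mathbb{Z}}$ is a uniform martingale.
   Context: A stationary process $(X_i)_{i\in\mathbb{Z}}$ on a finite or countable alphabet is a uniform martingale if the conditional distribution of $X_0$ given $X_{-1},\dots,X_{-n}$ converges as $n\to\infty$ to the conditional distribution of $X_0$ given the entire past $X_{-1},X_{-2},\dots$ in total variation, uniformly over all pasts. *)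

From HB Require Import structures.
From mathcomp Require Import all_boot all_order all_algebra.
From mathcomp Require Import all_classical all_reals all_analysis.
Set Implicit Arguments. Unset Strict Implicit. Unset Printing Implicit Defensive.
Import Order.TTheory GRing.Theory Num.Theory.
Local Open Scope classical_set_scope.
Local Open Scope ring_scope.

(* Cylinder sets of pasts (sequences indexed by nat: p k = value at time -(k+1)) *)
Definition cyl (A : Type) (n : nat) (q : nat -> A) : set (nat -> A) :=
  [set p | forall k, (k < n)%N -> p k = q k].
Definition cylinders (A : Type) : set (set (nat -> A)) :=
  [set C | exists n q, C = cyl n q].

Section Processes.
Context {d : measure_display} {T : measurableType d} {R : realType}
  (P : probability T R).

Definition discrete_rv (A : Type) (X : T -> A) : Prop :=
  forall x, measurable (X @^-1` [set x]).

Definition stationary (A : Type) (X : int -> T -> A) : Prop :=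
  forall (m k : int) (n : nat) (v : nat -> A),
    P [set w | forall j, (j < n)%N -> X (m + j%:Z) w = v j] =
    P [set w | forall j, (j < n)%N -> X (m + k + j%:Z) w = v j].

Definition mutually_independent (A : Type) (X : int -> T -> A) : Prop :=
  forall (s : seq int), uniq s -> forall v : int -> A,
    P [set w | forall i, i \in s -> X i w = v i] =
    (\prod_(i <- s) P (X i @^-1` [set v i]))%E.

Definition identically_distributed (A : Type) (X : int -> T -> A) : Prop :=
  forall i x, P (X i @^-1` [set x]) = P (X 0 @^-1` [set x]).

Definition iid (A : Type) (X : int -> T -> A) : Prop :=
  mutually_independent X /\ identically_distributed X.

Definition past (A : Type) (X : int -> T -> A) (w : T) : nat -> A :=
  fun k => X (- (k.+1)%:Z) w.

Definition past_event (A : Type) (X : int -> T -> A) (n : nat) (q : nat -> A)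
  : set T := past X @^-1` cyl n q.

Definition condP (A : Type) (X : int -> T -> A) (n : nat) (q : nat -> A) (x : A)
  : R :=
  fine (P (X 0 @^-1` [set x] `&` past_event X n q)) / fine (P (past_event X n q)).

(* uniform martingale: there is a version g of the regular conditional
   distribution of X_0 given the entire past (a probability kernel from pasts,
   measurable for the product sigma-algebra, satisfying the defining identity
   on the generating cylinder events), and the finite-past conditional
   distributions converge to it in total variation uniformly over all pasts
   (in the support, i.e. all of whose finite cylinders have positive
   probability, so that the finite conditionals are defined). *)
Definition uniform_martingale (A : countType) (X : int -> T -> A) : Prop :=
  exists g : (nat -> A) -> A -> R,
    [/\ (forall p x, 0 <= g p x),
        (forall p, (\esum_(x in [set: A]) (g p x)%:E = 1)%E),
        (* g(x | .) is measurable for the sigma-algebra on pasts generated by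
           cylinders (= product of the discrete sigma-algebras) *)
        (forall x (Y : set R), measurable Y ->
           <<s @cylinders A >> ((fun p => g p x) @^-1` Y)),
        (forall n q x, P (X 0 @^-1` [set x] `&` past_event X n q) =
           (\int[P]_(w in past_event X n q) (g (past X w) x)%:E)%E) &
        (forall eps : R, 0 < eps -> exists N : nat, forall n, (N <= n)%N ->
           forall q : nat -> A, (forall m, (0 < P (past_event X m q))%E) ->
           (\esum_(x in [set: A]) (`|condP X n q x - g q x|)%:E <= eps%:E)%E)].

End Processes.

(* Given the whole past p, X_0 = (a_0, b_0) is a function of a_0 alone, namely
   b_0 = F(a_0, b_{-1}, ..., b_{-a_0}) almost surely; as a_0 is independent of the
   past, the conditional law of X_0 given the past is
   g(p)(x, y) = P(a_0 = x) [y = F(x, b_{-1}, ..., b_{-x})].  Conditioning on the n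
   most recent values only gives the same law on the event a_0 <= n, so the total
   variation distance between the two conditional laws is at most 2 P(a_0 > n),
   which tends to 0 independently of the past. *)

From HB Require Import structures.
From mathcomp Require Import all_boot all_order all_algebra.
From mathcomp Require Import all_classical all_reals all_analysis.
From mathcomp Require Import lra.
Import Order.TTheory GRing.Theory Num.Theory.
Local Open Scope classical_set_scope.
Local Open Scope ring_scope.

(* Splitting a subset of a countable type into the fibers of [pickle] reduces
   statements about arbitrary subsets to statements about singletons. *)
Section pickle_fibers.
Context {A : countType} (S : set A).

Lemma pickle_fiber_cover : S = \bigcup_n (S `&` pickle @^-1` [set n]).
Proof.
by apply/seteqP; split => [x Sx|x [n _ []//]]; exists (pickle x).
Qed.

Lemma trivIset_pickle_fiber : trivIset setT (fun n => S `&` pickle @^-1` [set n]).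
Proof. by move=> i j _ _ [x [[_ <-] [_ <-]]]. Qed.

Lemma pickle_fiber_set1 n : S `&` pickle @^-1` [set n] = set0 \/
  exists x, S `&` pickle @^-1` [set n] = [set x].
Proof.
have [[x [Sx xn]]|N] := pselect (exists x, (S `&` pickle @^-1` [set n]) x).
  right; exists x; apply/seteqP; split => [y [_ yn]|_ ->] //=.
  by apply: (pcan_inj (@pickleK _)); rewrite yn xn.
by left; apply/seteqP; split => x // Sx; apply: N; exists x.
Qed.

End pickle_fibers.

Definition determined {A : Type} (m : nat) (Q : set (nat -> A)) :=
  forall p p', mkseq p m = mkseq p' m -> Q p -> Q p'.

Lemma mkseq_eqP {A : Type} (m : nat) (p p' : nat -> A) :
  mkseq p m = mkseq p' m <-> (forall k, (k < m)%N -> p k = p' k).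
Proof.
split=> [E k km|h]; last first.
  by apply/eq_in_map => k; rewrite mem_iota add0n => /andP[_ /h].
have := congr1 (fun s => nth (p 0%N) s k) E.
by rewrite /= !nth_mkseq.
Qed.

Lemma cylE {A : Type} (m : nat) (q : nat -> A) :
  cyl m q = (fun p => mkseq p m) @^-1` [set mkseq q m].
Proof. by apply/seteqP; split => p /mkseq_eqP. Qed.

Lemma determined_cyl {A : Type} (n : nat) (q : nat -> A) : determined n (cyl n q).
Proof. by move=> p p' /mkseq_eqP e c k kn; rewrite -e ?c. Qed.

Lemma determinedW {A : Type} {m m' : nat} {Q : set (nat -> A)} :
  (m <= m')%N -> determined m Q -> determined m' Q.
Proof.
move=> mm' dQ p p' /mkseq_eqP e; apply: dQ; apply/mkseq_eqP => k km.
by apply: e; exact: leq_trans km mm'.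
Qed.

Lemma determinedI {A : Type} {m : nat} {Q Q' : set (nat -> A)} :
  determined m Q -> determined m Q' -> determined m (Q `&` Q').
Proof. by move=> dQ dQ' p p' e [Qp Q'p]; split; [exact: dQ e Qp|exact: dQ' e Q'p]. Qed.

Lemma determinedE {A : Type} {m : nat} {Q : set (nat -> A)} : determined m Q ->
  Q = (fun p => mkseq p m) @^-1` ((fun p => mkseq p m) @` Q).
Proof.
move=> dQ; apply/seteqP; split => [p Qp|p [p' Qp' e]] /=; first by exists p.
exact: dQ e Qp'.
Qed.

Lemma preimage_mkseq_set1 {A : Type} (m : nat) (s : seq A) :
  (fun p => mkseq p m) @^-1` [set s] = set0 \/
  exists q, (fun p => mkseq p m) @^-1` [set s] = cyl m q.
Proof.
have [[q qs]|N] := pselect (exists q : nat -> A, mkseq q m = s).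
  by right; exists q; rewrite cylE qs.
by left; apply/seteqP; split => p //= ps; apply: N; exists p.
Qed.

Lemma determined_measurable {A : countType} {m : nat} {Q : set (nat -> A)} :
  determined m Q -> <<s @cylinders A >> Q.
Proof.
move=> /determinedE ->; rewrite (pickle_fiber_cover (_ @` _)) preimage_bigcup.
apply: sigma_algebra_bigcup => n.
have [->|[s ->]] := pickle_fiber_set1 ((fun p => mkseq p m) @` Q) n.
  by rewrite preimage_set0; exact: sigma_algebra0.
have [->|[q ->]] := preimage_mkseq_set1 m s; first exact: sigma_algebra0.
by apply: sub_sigma_algebra; exists m, q.
Qed.

Section discrete_probability.
Context {d : measure_display} {T : measurableType d} {R : realType}
  (P : probability T R).

Definition pr (A : set T) : R := fine (P A).

Lemma prE {A : set T} : measurable A -> P A = (pr A)%:E.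
Proof. by move=> mA; rewrite /pr fineK // fin_num_measure. Qed.

Lemma pr_ge0 (A : set T) : 0 <= pr A.
Proof. by rewrite /pr fine_ge0. Qed.

Lemma measurable_preimage_discrete {A : countType} {Y : T -> A} (S : set A) :
  discrete_rv Y -> measurable (Y @^-1` S).
Proof.
move=> mY; rewrite (pickle_fiber_cover S) preimage_bigcup.
apply: bigcupT_measurable => n.
have [->|[x ->]] := pickle_fiber_set1 S n; last exact: mY.
by rewrite preimage_set0.
Qed.

Lemma measure_eq_outside_null {A A' N : set T} :
  measurable A -> measurable A' -> measurable N -> P N = 0%E ->
  A `\` N = A' `\` N -> P A = P A'.
Proof.
move=> mA mA' mN N0 AA'.
have UN C : C `|` N = C `\` N `|` N by rewrite setUDl setDv setD0.
rewrite -(@measureU0 _ _ _ P _ _ mA mN N0) -(@measureU0 _ _ _ P _ _ mA' mN N0).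
by rewrite UN AA' -UN.
Qed.

Lemma indep_preimage_discrete {A : countType} {Y : T -> A} {E : set T} :
  discrete_rv Y -> measurable E ->
  (forall y, P (Y @^-1` [set y] `&` E) = (P (Y @^-1` [set y]) * P E)%E) ->
  forall S, P (Y @^-1` S `&` E) = (P (Y @^-1` S) * P E)%E.
Proof.
move=> mY mE hY S.
pose D n := Y @^-1` (S `&` pickle @^-1` [set n]).
have YSE : Y @^-1` S = \bigcup_n D n.
  by rewrite {1}(pickle_fiber_cover S) preimage_bigcup.
have mD n : measurable (D n) by exact: measurable_preimage_discrete.
have tD : trivIset setT D.
  by move=> i j _ _ [w [Di Dj]]; apply: (trivIset_pickle_fiber S) => //; exists (Y w).
have hD n : P (D n `&` E) = (P (D n) * P E)%E.
  rewrite /D; have [->|[y ->]] := pickle_fiber_set1 S n; last exact: hY.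
  by rewrite preimage_set0 set0I measure0 mul0e.
rewrite YSE setI_bigcupl !measure_bigcup //=; last first.
- by move=> i j _ _ [w [[Di _] [Dj _]]]; apply: tD => //; exists w.
- by move=> n _; exact: measurableI.
rewrite -(fineK (fin_num_measure P _ mE)) muleC -nneseriesZl //.
by apply: eq_eseriesr => n _; rewrite hD fineK ?fin_num_measure // muleC.
Qed.

Lemma indep_discrete {A A' : countType} {Y : T -> A} {Z : T -> A'} :
  discrete_rv Y -> discrete_rv Z ->
  (forall y z, P (Y @^-1` [set y] `&` Z @^-1` [set z]) =
     (P (Y @^-1` [set y]) * P (Z @^-1` [set z]))%E) ->
  forall S S', P (Y @^-1` S `&` Z @^-1` S') =
     (P (Y @^-1` S) * P (Z @^-1` S'))%E.
Proof.
move=> mY mZ hYZ S S'.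
have hS z : P (Y @^-1` S `&` Z @^-1` [set z]) =
    (P (Y @^-1` S) * P (Z @^-1` [set z]))%E.
  by apply: indep_preimage_discrete => // y; exact: hYZ.
rewrite setIC muleC; apply: indep_preimage_discrete => //.
  exact: measurable_preimage_discrete.
by move=> z; rewrite setIC hS muleC.
Qed.

Lemma esum_discrete_law {A : countType} {Y : T -> A} : discrete_rv Y ->
  (\esum_(z in [set: A]) P (Y @^-1` [set z]) = 1)%E.
Proof.
move=> mY; pose f n := P (Y @^-1` (pickle @^-1` [set n])).
have -> : (\esum_(z in [set: A]) P (Y @^-1` [set z]) =
    \esum_(n in range (@pickle A)) f n)%E.
  rewrite (@reindex_esum _ _ _ [set: A] _ (@pickle A)); last first.
    split=> [x _|x y _ _ /(pcan_inj (@pickleK _))|n [x _ <-]] //; by exists x.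
  apply: eq_esum => x _; rewrite /f; congr (P _); apply/seteqP; split => w /=.
    by move=> ->.
  by move/(pcan_inj (@pickleK _)).
rewrite esum_mkcond -nneseries_esumT; last by move=> n; case: ifP.
rewrite (eq_eseriesr (g := f)); last first.
  move=> n _; case: ifPn => // /negP nR; rewrite /f.
  rewrite (_ : _ @^-1` _ = set0) ?measure0 //; apply/seteqP; split => w //= wn.
  by apply: nR; rewrite inE; exists (Y w).
rewrite -(probability_setT P) (_ : setT = \bigcup_n Y @^-1` (pickle @^-1` [set n])).
  rewrite measure_bigcup //=.
  - by apply: eq_eseriesl => n; rewrite in_setT.
  - by move=> n _; exact: measurable_preimage_discrete.
  - by move=> i j _ _ [w [/= <- /= <-]].
by apply/seteqP; split => // w _; exists (pickle (Y w)).
Qed.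

Lemma fsum_pr_preimage_le {A : choiceType} {Y : T -> A} {C : set T} {F : set A} :
  finite_set F -> measurable C -> (forall z, measurable (Y @^-1` [set z])) ->
  \sum_(z \in F) pr (Y @^-1` [set z] `&` C) <= pr C.
Proof.
move=> finF mC mY.
have mYC z : measurable (Y @^-1` [set z] `&` C) by exact: measurableI.
rewrite -lee_fin -fsumEFin // (eq_fsbigr (fun z => P (Y @^-1` [set z] `&` C))).
  rewrite -measure_fin_bigcup //; last by move=> i j _ _ [w [[/= <- _] [/= <- _]]].
  rewrite -prE // le_measure ?inE //; last by move=> w [z _ []].
  exact: fin_bigcup_measurable.
by move=> z _; rewrite -prE.
Qed.

Lemma pr_tail_small {Y : T -> nat} : discrete_rv Y ->
  forall e, 0 < e -> exists N, forall n, (N <= n)%N -> pr [set w | (n < Y w)%N] <= e.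
Proof.
move=> mY e e0; pose F n := Y @^-1` [set x | (n < x)%N].
have mF n : measurable (F n) by exact: measurable_preimage_discrete.
have cF : (P \o F) n @[n --> \oo] --> P (\bigcap_n F n).
  apply: nonincreasing_cvg_mu => //.
  - by rewrite (le_lt_trans (probability_le1 P _)) ?ltey.
  - exact: bigcapT_measurable.
  - by move=> m n mn; apply/subsetPset => w; exact: leq_ltn_trans.
rewrite (_ : \bigcap_n F n = set0) ?measure0 in cF; last first.
  by apply/seteqP; split => w // /(_ (Y w) I); rewrite /F /= ltnn.
move: cF => /fine_cvg/cvgrPdist_le/(_ e e0)[N _ HN].
exists N => n /HN /=; rewrite sub0r normrN ger0_norm //; exact: pr_ge0.
Qed.

End discrete_probability.

Section forced_process.
Context {d : measure_display} {T : measurableType d} {R : realType}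
  (P : probability T R) {B : countType} (a : int -> T -> nat) (b : int -> T -> B).
Hypotheses (ma : forall i, discrete_rv (a i)) (mb : forall i, discrete_rv (b i)).
Hypothesis a0_indep_finite_past : forall s : seq int, all (fun j => j < 0) s ->
  forall (x : nat) (v : int -> nat * B),
    P [set w | a 0 w = x /\ forall j, j \in s -> (a j w, b j w) = v j] =
    (P (a 0 @^-1` [set x]) *
     P [set w | forall j, j \in s -> (a j w, b j w) = v j])%E.
Variable F0 : nat -> seq B -> B.
Hypothesis b0_forced :
  {ae P, forall w, b 0 w = F0 (a 0 w) (mkseq (fun k => b (0 - (k.+1)%:Z) w) (a 0 w))}.

Local Notation X := (fun i w => (a i w, b i w)).

Lemma discrete_X i : discrete_rv (X i).
Proof.
move=> [x y]; rewrite (_ : _ @^-1` _ = a i @^-1` [set x] `&` b i @^-1` [set y]).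
  by apply: measurableI; [exact: ma | exact: mb].
by apply/seteqP; split => w /= => [[-> ->]|[-> ->]].
Qed.

Lemma past_eventS n q : past_event X n.+1 q =
  past_event X n q `&` X (- (n.+1)%:Z) @^-1` [set q n].
Proof.
apply/seteqP; split => w /= => [h|[h1 h2] k].
  by split; [move=> k kn; apply: h; rewrite ltnS ltnW | exact: h].
by rewrite ltnS leq_eqVlt => /orP[/eqP->|]; [exact: h2 | exact: h1].
Qed.

Lemma measurable_past_event n q : measurable (past_event X n q).
Proof.
elim: n => [|n IH]; last first.
  by rewrite past_eventS; apply: measurableI => //; exact: discrete_X.
by rewrite (_ : past_event _ _ _ = setT) //; apply/seteqP; split => w //= _ k.
Qed.

Lemma a0_indep_past_event n q x : P (a 0 @^-1` [set x] `&` past_event X n q) =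
  (P (a 0 @^-1` [set x]) * P (past_event X n q))%E.
Proof.
(* the times -1, ..., -n, and the value prescribed at time -(k+1) is q k *)
pose s := [seq - (k.+1)%:Z | k <- iota 0 n].
pose v (j : int) := q (`|j|%N).-1.
have sE : [set w | forall j, j \in s -> (a j w, b j w) = v j] = past_event X n q.
  apply/seteqP; split => w /= => [h k kn|h j /mapP[k]].
    have -> : q k = v (- (k.+1)%:Z) by rewrite /v abszN absz_nat.
    by apply: h; apply/mapP; exists k; rewrite ?mem_iota.
  by rewrite mem_iota add0n => /andP[_ kn] ->; rewrite /v abszN absz_nat; exact: h.
rewrite -sE -a0_indep_finite_past; last first.
  by rewrite all_map; apply/allP => k _ /=; rewrite oppr_lt0.
by congr (P _); apply/seteqP; split => w [].
Qed.

Definition past_window m w := mkseq (past X w) m.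

Lemma preimage_past_window m (S : set (seq (nat * B))) :
  past_window m @^-1` S = past X @^-1` ((fun p => mkseq p m) @^-1` S).
Proof. by []. Qed.

Lemma discrete_past_window m : discrete_rv (past_window m).
Proof.
move=> s; rewrite preimage_past_window.
have [->|[q ->]] := preimage_mkseq_set1 m s; last exact: measurable_past_event.
by rewrite preimage_set0.
Qed.

Lemma a0_indep_past {m : nat} (S : set nat) {Q : set (nat -> nat * B)} :
  determined m Q ->
  P (a 0 @^-1` S `&` past X @^-1` Q) = (P (a 0 @^-1` S) * P (past X @^-1` Q))%E.
Proof.
move=> /determinedE ->; rewrite -preimage_past_window.
apply: (indep_discrete P (ma 0) (discrete_past_window m)) => x s.
rewrite preimage_past_window.
have [->|[q ->]] := preimage_mkseq_set1 m s; last exact: a0_indep_past_event.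
by rewrite !preimage_set0 setI0 measure0 mule0.
Qed.

Lemma measurable_past {m : nat} {Q : set (nat -> nat * B)} : determined m Q ->
  measurable (past X @^-1` Q).
Proof.
move=> /determinedE ->; rewrite -preimage_past_window.
exact: measurable_preimage_discrete (discrete_past_window m).
Qed.

Definition window (p : nat -> nat * B) x := mkseq (fun k => (p k).2) x.

Definition forcing_pasts (z : nat * B) := [set p | z.2 = F0 z.1 (window p z.1)].

Lemma determined_forcing_pasts z : determined z.1 (forcing_pasts z).
Proof.
move=> p p' /mkseq_eqP e; rewrite /forcing_pasts /= => ->; congr F0.
by apply/mkseq_eqP => k /e ->.
Qed.

Definition forced_X0 p w := (a 0 w, F0 (a 0 w) (window p (a 0 w))).

Definition kernel p (z : nat * B) : R :=
  pr P (a 0 @^-1` [set z.1]) * (z.2 == F0 z.1 (window p z.1))%:R.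

Lemma kernelE p z : kernel p z = pr P (forced_X0 p @^-1` [set z]).
Proof.
case: z => x y; rewrite /kernel /=; case: eqP => [->|ne]; [rewrite mulr1|rewrite mulr0].
  by congr pr; apply/seteqP; split=> [w /= <-|w []].
rewrite (_ : forced_X0 p @^-1` [set (x, y)] = set0) /pr ?measure0 //.
by apply/seteqP; split => w //= [ax]; rewrite ax => /esym.
Qed.

Lemma kernel_ge0 p z : 0 <= kernel p z.
Proof. by rewrite kernelE pr_ge0. Qed.

Lemma discrete_forced_X0 p : discrete_rv (forced_X0 p).
Proof.
move=> z; rewrite (_ : _ @^-1` _ = a 0 @^-1` [set x | (x, F0 x (window p x)) = z]) //.
exact: measurable_preimage_discrete.
Qed.

Lemma esum_kernel p : (\esum_(z in [set: nat * B]) (kernel p z)%:E = 1)%E.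
Proof.
rewrite -(esum_discrete_law P (discrete_forced_X0 p)); apply: eq_esum => z _.
by rewrite kernelE -prE //; exact: discrete_forced_X0.
Qed.

Lemma kernel_measurable z (Y : set R) :
  <<s @cylinders (nat * B) >> ((fun p => kernel p z) @^-1` Y).
Proof.
apply: (@determined_measurable _ z.1) => p p' /mkseq_eqP e.
suff wE : window p z.1 = window p' z.1 by rewrite /preimage /= /kernel wE.
by apply/mkseq_eqP => k /e ->.
Qed.

Lemma window_past w x :
  window (past X w) x = mkseq (fun k => b (0 - (k.+1)%:Z) w) x.
Proof. by apply: eq_mkseq => k; rewrite /past sub0r. Qed.

Lemma measure_X0_past_event n q z : P (X 0 @^-1` [set z] `&` past_event X n q) =
  (P (a 0 @^-1` [set z.1]) * P (past_event X n q `&` past X @^-1` forcing_pasts z))%E.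
Proof.
have dQ : determined (maxn n z.1) (cyl n q `&` forcing_pasts z).
  apply: determinedI.
    exact: determinedW (leq_maxl n z.1) (determined_cyl n q).
  exact: determinedW (leq_maxr n z.1) (determined_forcing_pasts z).
rewrite -[past_event _ _ _ `&` _]/(past X @^-1` (cyl n q `&` forcing_pasts z)).
rewrite -(a0_indep_past _ dQ).
have [N [mN N0 hN]] := b0_forced.
have b0E w : ~ N w -> b 0 w = F0 (a 0 w) (window (past X w) (a 0 w)).
  by move=> Nw; apply: contra_notP Nw => nb; apply: hN; rewrite /= -window_past.
apply: (measure_eq_outside_null _ _ _ mN N0).
- by apply: measurableI; [exact: discrete_X | exact: measurable_past_event].
- by apply: measurableI; [exact: ma | exact: measurable_past dQ].
apply/seteqP; split => w [[Xw Ew] Nw]; (split; last exact: Nw).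
all: case: z {dQ} Xw Ew => x y /=.
  by case=> <- <-; split => //; split => //; exact: b0E.
by move=> ax [c e]; split => //=; rewrite (b0E w Nw) ax [y]e.
Qed.

Lemma kernel_integral n q z : P (X 0 @^-1` [set z] `&` past_event X n q) =
  (\int[P]_(w in past_event X n q) (kernel (past X w) z)%:E)%E.
Proof.
have mQ := measurable_past (determined_forcing_pasts z).
have kE w : kernel (past X w) z =
    pr P (a 0 @^-1` [set z.1]) * \1_(past X @^-1` forcing_pasts z) w.
  rewrite /kernel /indic; congr (_ * _%:R).
  by case: eqP => e; [rewrite mem_set | rewrite memNset].
under eq_integral => w _ do rewrite kE.
rewrite (@integralZl_indic _ _ _ P _ (measurable_past_event n q)
  (fun _ => past X @^-1` forcing_pasts z)) ?ltNge ?pr_ge0 //.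
rewrite integral_indic //; last exact: measurable_past_event.
apply: etrans (measure_X0_past_event n q z) _; rewrite setIC; congr mule.
exact: prE (ma 0 _).
Qed.

Lemma condP_kernel n q z : (z.1 <= n)%N -> 0 < pr P (past_event X n q) ->
  condP P X n q z = kernel q z.
Proof.
move=> zn E0; set E := past_event X n q.
have mE : measurable E by exact: measurable_past_event.
have EQ : pr P (E `&` past X @^-1` forcing_pasts z) =
    (z.2 == F0 z.1 (window q z.1))%:R * pr P E.
  have wE w : E w -> window (past X w) z.1 = window q z.1.
    by move=> Ew; apply/mkseq_eqP => k kz; rewrite Ew //; exact: leq_trans kz zn.
  case: eqP => e; [rewrite mul1r | rewrite mul0r].
    congr pr; apply/seteqP; split => [w []//|w Ew]; split => //.
    by rewrite /preimage /forcing_pasts /= (wE w Ew).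
  rewrite (_ : _ `&` _ = set0) /pr ?measure0 //.
  by apply/seteqP; split => // w [Ew]; rewrite /preimage /forcing_pasts /= (wE w Ew).
have prX0 : pr P (X 0 @^-1` [set z] `&` E) =
    pr P (a 0 @^-1` [set z.1]) * pr P (E `&` past X @^-1` forcing_pasts z).
  apply: EFin_inj; rewrite EFinM -!prE ?measure_X0_past_event //.
  - by apply: measurableI => //; exact: measurable_past (determined_forcing_pasts z).
  - exact: ma.
  - by apply: measurableI => //; exact: discrete_X.
by rewrite /condP -/(pr P _) -/(pr P E) prX0 EQ mulrA mulfK ?gt_eqF.
Qed.

Definition a0_exceeds n := [set w | (n < a 0 w)%N].

Lemma measurable_a0_exceeds n : measurable (a0_exceeds n).
Proof. exact: measurable_preimage_discrete [set x | (n < x)%N] (ma 0). Qed.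

Lemma condP_kernel_dist_le n q z : 0 < pr P (past_event X n q) ->
  `|condP P X n q z - kernel q z| <=
    pr P (X 0 @^-1` [set z] `&` (past_event X n q `&` a0_exceeds n)) /
      pr P (past_event X n q) +
    pr P (forced_X0 q @^-1` [set z] `&` a0_exceeds n).
Proof.
move=> E0; set E := past_event X n q; have [zn|nz] := leqP z.1 n.
  rewrite condP_kernel // subrr normr0.
  by apply: addr_ge0; [apply: divr_ge0|]; exact: pr_ge0.
have -> : X 0 @^-1` [set z] `&` (E `&` a0_exceeds n) = X 0 @^-1` [set z] `&` E.
  by apply/seteqP; split => [w [? []]|w [Xw Ew]] //; split => //; move: nz; rewrite -Xw.
have -> : forced_X0 q @^-1` [set z] `&` a0_exceeds n = forced_X0 q @^-1` [set z].
  by apply/seteqP; split => [w []|w Fw] //; split => //; move: nz; rewrite -Fw.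
rewrite -kernelE; apply: le_trans (ler_normB _ _) _.
by rewrite !ger0_norm ?kernel_ge0 // divr_ge0 // pr_ge0.
Qed.

Lemma pr_past_event_a0_exceeds n q :
  pr P (past_event X n q `&` a0_exceeds n) =
  pr P (past_event X n q) * pr P (a0_exceeds n).
Proof.
have mT := measurable_a0_exceeds n.
have mE := measurable_past_event n q.
apply: EFin_inj; rewrite EFinM -!prE //; last exact: measurableI.
by rewrite setIC muleC; exact: (a0_indep_past [set x | (n < x)%N] (determined_cyl n q)).
Qed.

Lemma condP_kernel_uniform_tv eps : 0 < eps -> exists N, forall n, (N <= n)%N ->
  forall q, (forall m, (0 < P (past_event X m q))%E) ->
  (\esum_(z in [set: nat * B]) (`|condP P X n q z - kernel q z|)%:E <= eps%:E)%E.
Proof.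
move=> eps0; have [N HN] := pr_tail_small P (ma 0) _ (divr_gt0 eps0 (ltr0Sn _ 1)).
exists N => n Nn q qpos; set E := past_event X n q.
have mE : measurable E by exact: measurable_past_event.
have E0 : 0 < pr P E by have := qpos n; rewrite prE // lte_fin.
apply: ge_ereal_sup => _ [F [finF _] <-] /=.
set T_n := a0_exceeds n.
apply: le_trans.
  apply: (lee_fsum (b := fun z => (pr P (X 0 @^-1` [set z] `&` (E `&` T_n)) / pr P E +
    pr P (forced_X0 q @^-1` [set z] `&` T_n))%:E) finF).
  by move=> z _; rewrite lee_fin; exact: condP_kernel_dist_le.
have mT : measurable T_n by exact: measurable_a0_exceeds.
have sum_X0 := fsum_pr_preimage_le P finF (measurableI _ _ mE mT) (discrete_X 0).
have sum_forced := fsum_pr_preimage_le P finF mT (discrete_forced_X0 q).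
rewrite fsumEFin // lee_fin fsbig_split // -mulr_fsuml.
have sum_condP :
    (\sum_(z \in F) pr P (X 0 @^-1` [set z] `&` (E `&` T_n))) / pr P E <=
    pr P (E `&` T_n) / pr P E by rewrite ler_pM2r ?invr_gt0.
apply: le_trans (lerD sum_condP sum_forced) _.
rewrite pr_past_event_a0_exceeds mulrAC mulfV ?gt_eqF // mul1r.
have := HN n Nn; rewrite -/(a0_exceeds n) -/T_n; lra.
Qed.

End forced_process.

Theorem mainTheorem10 (d : measure_display) (T : measurableType d) (R : realType)
  (P : probability T R) (B : countType)
  (a : int -> T -> nat) (b : int -> T -> B) :
  (forall i, discrete_rv (a i)) ->
  (forall i, discrete_rv (b i)) ->
  (forall i w, (0 < a i w)%N) ->
  stationary P (fun i w => (a i w, b i w)) ->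
  iid P a ->
  (forall (i : int) (s : seq int), all (fun j => j < i) s ->
     forall (x : nat) (v : int -> nat * B),
       P [set w | a i w = x /\ forall j, j \in s -> (a j w, b j w) = v j] =
       (P (a i @^-1` [set x]) *
        P [set w | forall j, j \in s -> (a j w, b j w) = v j])%E) ->
  (forall i : int, exists F : nat -> seq B -> B,
     {ae P, forall w,
        b i w = F (a i w) (mkseq (fun k => b (i - (k.+1)%:Z) w) (a i w))}) ->
  uniform_martingale P (fun i w => (a i w, b i w)).
Proof.
move=> ma mb _ _ _ a_indep_past b_forced; have [F0 b0_forced] := b_forced 0.
exists (kernel P a F0); split.
- exact: kernel_ge0.
- exact: esum_kernel.
- by move=> z Y _; exact: kernel_measurable.
- exact: (@kernel_integral _ _ _ P _ a b ma mb (a_indep_past 0) F0 b0_forced).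
- exact: (@condP_kernel_uniform_tv _ _ _ P _ a b ma mb (a_indep_past 0) F0 b0_forced).
Qed.
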